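(* Let $\Sigma$ be a system as in the context, $\mathcal G=\mathrm{im}(\mathcal{R}each(A,G))$, $\mathcal Q=\ker(\mathcal{O}bs_n(A,C))$, and let $\mathcal S_1,\dots,\mathcal S_\delta\subseteq\mathbb R^n$ be the generalized real eigenspaces of $A$ (one for each real eigenvalue and one for each pair of complex conjugate eigenvalues). Assume that for every $k$: ($\mathcal S_k\subseteq\mathcal G$ or $\mathcal S_k\cap\mathcal G=\{0\}$) and ($\mathcal S_k\subseteq\mathcal Q$ or $\mathcal S_k\cap\mathcal Q=\{0\}$). Let $\mathcal S_\Sigma$ be the direct sum of all $\mathcal S_k$ with $\mathcal S_k\subseteq\mathcal Q$ and $\mathcal S_k\cap\mathcal G=\{0\}$, and let $R$ be any real matrix with $n$ columns such that $\ker(R)=\mathcal S_\Sigma$. Then $\ker([R\ \ -R])$ is a total relation satisfying conditions $(h_0)$–$(h_5)$ below with $R_1=R_2=R$, and it has maximal dimension among all total relations $\mathcal R=\ker([R_1\ \ -R_2])\subseteq\mathbb R^n\times\mathbb R^n$ ($R_1,R_2$ with $n$ columns and the same number of rows) satisfying: $(h_0)$ $\mathrm{diag}(A,A)\mathcal R\subseteq\mathcal R$; $(h_1)$ $R_1B=R_2B$; $(h_2)$ $R_1G\mu=R_2G\mu$; $(h_3)$ $R_1GG^TR_1^T=R_2GG^TR_2^T$; $(h_4)$ $\mathcal R\subseteq\ker([C\ \ -C])$; $(h_5)$ $\mathcal G\cap\ker(R_i)=\{0\}$ for $i=1,2$.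
   Context: $\Sigma$: $x(t+1)=Ax(t)+Bu(t)+Gw(t)$, $y(t)=Cx(t)+\nu(t)$, $t\in\mathbb N$, $x\in\mathbb R^n$, $u\in\mathbb R^m$, $w\in\mathbb R^l$, $y,\nu\in\mathbb R^p$, where $(w(t))_t$ is i.i.d. $\mathcal N(\mu,I_l)$ and $(\nu(t))_t$ is i.i.d. $\mathcal N(0,\Psi)$. $\mathcal{R}each(A,G)=[G\ AG\ \cdots\ A^{n-1}G]$; $\mathcal{O}bs_n(A,C)$ is the matrix obtained by stacking $C,CA,\dots,CA^{n-1}$ vertically. A relation $\mathcal R\subseteq\mathbb R^n\times\mathbb R^n$ is total if every $x$ is a first component and every $x'$ a second component of some pair in $\mathcal R$. *)

From HB Require Import structures.
From mathcomp Require Import all_boot all_order all_algebra.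
From mathcomp Require Import reals.
Set Implicit Arguments. Unset Strict Implicit. Unset Printing Implicit Defensive.
Import Order.TTheory GRing.Theory Num.Theory.
Local Open Scope ring_scope.

Section Defs.
Variable R : realType.

(* Reach(A,G) = [G  AG  ...  A^(k-1) G]  (k blocks), built recursively as
   [G, A * Reach_{k-1}] ; column count k * l. *)
Fixpoint reach_k (n l : nat) (A : 'M[R]_n) (G : 'M[R]_(n, l)) (k : nat)
  : 'M[R]_(n, k * l) :=
  match k return 'M[R]_(n, k * l) with
  | 0 => 0
  | k'.+1 => row_mx G (A *m reach_k A G k')
  end.
Definition Reach (n l : nat) (A : 'M[R]_n) (G : 'M[R]_(n, l)) := reach_k A G n.

(* Obs_k(A,C) = [C; CA; ...; CA^(k-1)], built recursively as [C; Obs_{k-1} A]. *)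
Fixpoint obs_k (n p : nat) (A : 'M[R]_n) (C : 'M[R]_(p, n)) (k : nat)
  : 'M[R]_(k * p, n) :=
  match k return 'M[R]_(k * p, n) with
  | 0 => 0
  | k'.+1 => col_mx C (obs_k A C k' *m A)
  end.
Definition Obs (n p : nat) (A : 'M[R]_n) (C : 'M[R]_(p, n)) := obs_k A C n.

Definition in_im (n k : nat) (M : 'M[R]_(n, k)) (x : 'cV[R]_n) : Prop :=
  exists u : 'cV[R]_k, x = M *m u.
Definition in_ker (r n : nat) (M : 'M[R]_(r, n)) (x : 'cV[R]_n) : Prop :=
  M *m x = 0.

(* dimension of ker M (M acting on column vectors): rank of a matrix whose
   row space is {u^T | M u = 0} *)
Definition kerdim (r n : nat) (M : 'M[R]_(r, n)) : nat := \rank (kermx M^T).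

(* evaluation of a polynomial at a square matrix (valid for every n, incl. 0) *)
Definition peval (n : nat) (q : {poly R}) (A : 'M[R]_n) : 'M[R]_n :=
  \sum_(i < size q) q`_i *: A ^+ i.

(* Generalized real eigenspaces of A: one for each monic irreducible real
   factor q of the characteristic polynomial (q = X - lambda for a real
   eigenvalue lambda, q = (X - lambda)(X - conj lambda) for a pair of complex
   conjugate eigenvalues); the space is ker q(A)^n. *)
Definition real_eig_factor (n : nat) (A : 'M[R]_n) (q : {poly R}) : Prop :=
  q \is monic /\ irreducible_poly q /\ q %| char_poly A.
Definition in_geneig (n : nat) (A : 'M[R]_n) (q : {poly R}) (x : 'cV[R]_n) : Prop :=
  (peval q A) ^+ n *m x = 0.

Definition in_rel (r n : nat) (R1 R2 : 'M[R]_(r, n)) (x x' : 'cV[R]_n) : Prop :=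
  row_mx R1 (- R2) *m col_mx x x' = 0.

Definition total_rel (n : nat) (rel : 'cV[R]_n -> 'cV[R]_n -> Prop) : Prop :=
  (forall x, exists x', rel x x') /\ (forall x', exists x, rel x x').

Definition h_conditions (n m l p r : nat) (A : 'M[R]_n) (B : 'M[R]_(n, m))
  (G : 'M[R]_(n, l)) (C : 'M[R]_(p, n)) (mu : 'cV[R]_l)
  (R1 R2 : 'M[R]_(r, n)) : Prop :=
  (forall x x', in_rel R1 R2 x x' -> in_rel R1 R2 (A *m x) (A *m x')) /\
  R1 *m B = R2 *m B /\
  R1 *m G *m mu = R2 *m G *m mu /\
  R1 *m G *m G^T *m R1^T = R2 *m G *m G^T *m R2^T /\
  (forall x x', in_rel R1 R2 x x' -> in_rel C C x x') /\
  (forall x, in_im (Reach A G) x -> in_ker R1 x -> x = 0) /\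
           (forall x, in_im (Reach A G) x -> in_ker R2 x -> x = 0).

End Defs.

From HB Require Import structures.
From mathcomp Require Import all_boot all_order all_algebra.
From mathcomp Require Import reals.
From mathcomp Require Import ring.
From Stdlib Require Import Classical.
Import Order.TTheory GRing.Theory Num.Theory.
Local Open Scope ring_scope.
Set Implicit Arguments. Unset Strict Implicit. Unset Printing Implicit Defensive.

(* Every x is the sum of its primary components p_q(A) x, one in each generalized
   eigenspace S_q = ker q(A)^n of a monic irreducible factor q of the characteristic
   polynomial; being polynomials in A applied to x, the components stay in every
   A-invariant subspace containing x.

   S_Sigma = ker R is A-invariant and lies in Q, hence in ker C, which gives (h0)
   and (h4). It meets G trivially: the component along S_q of some x in S_Sigma /\ G
   lies in G, so it vanishes if S_q is one of the summands of S_Sigma, and otherwise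
   it also lies in a sum of generalized eigenspaces of factors coprime to q.

   For maximality only the pairs (0, y) of the relation matter: by (h0), (h4) and (h5)
   the subspace ker R2 is A-invariant, contained in ker C (hence in Q) and meets G
   trivially. By the dichotomy each nonzero primary component of y in ker R2 then lies
   in some S_q contained in Q and meeting G trivially, so ker R2 is contained in
   S_Sigma = ker R, and rank R <= rank R2 bounds the kernel dimensions. *)

Section PolyFactor.
Variable F : fieldType.
Implicit Types f g p q : {poly F}.

Lemma irredpZ c q : c != 0 -> irreducible_poly q -> irreducible_poly (c *: q).
Proof.
move=> c_neq0 [q_gt1 q_irr]; split=> [|d d_neq1]; first by rewrite size_scale.
rewrite dvdpZr // => d_q; apply: eqp_trans (q_irr d d_neq1 d_q) _.
by rewrite eqp_sym eqp_scale.
Qed.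

Lemma exists_monic_irredp_dvdp f : (1 < size f)%N ->
  exists q, [/\ q \is monic, irreducible_poly q & q %| f].
Proof.
elim: {f}(size f).+1 {-2}f (ltnSn (size f)) => // N IH f f_small f_gt1.
have f_neq0 : f != 0 by rewrite -size_poly_gt0 (ltn_trans _ f_gt1).
have [f_irr | f_red] := classic (irreducible_poly f).
  have lc_neq0 : (lead_coef f)^-1 != 0 by rewrite invr_eq0 lead_coef_eq0.
  exists ((lead_coef f)^-1 *: f); split; last by rewrite dvdpZl.
    by apply/monicP; rewrite lead_coefZ mulVf ?lead_coef_eq0.
  exact: irredpZ.
have [d [d_neq1 d_f d_neqp]] : exists d : {poly F}, [/\ size d != 1, d %| f & ~~ (d %= f)].
  apply: NNPP => no_d; apply: f_red; split=> // d d_neq1 d_f.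
  by apply/negPn/negP => d_neqp; apply: no_d; exists d.
have d_neq0 : d != 0 by apply: contraNneq f_neq0 => d0; move: d_f; rewrite d0 dvd0p.
have d_small : (size d < size f)%N.
  by rewrite ltn_neqAle dvdp_size_eqp // d_neqp dvdp_leq.
have d_gt1 : (1 < size d)%N.
  by move: d_neq0 d_neq1; rewrite -size_poly_gt0; case: (size d) => [|[]].
have [q [q_monic q_irr q_d]] := IH d (leq_trans d_small (ltnSE f_small)) d_gt1.
by exists q; split=> //; apply: dvdp_trans d_f.
Qed.

Lemma exists_max_power_dvdp f q : f != 0 -> (1 < size q)%N ->
  exists k g, f = q ^+ k * g /\ ~~ (q %| g).
Proof.
elim: {f}(size f).+1 {-2}f (ltnSn (size f)) => // N IH f f_small f_neq0 q_gt1.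
have [q_f | q_Nf] := boolP (q %| f); last by exists 0%N, f; rewrite mul1r.
have q_neq0 : q != 0 by rewrite -size_poly_gt0 (ltn_trans _ q_gt1).
have f_eq : f = f %/ q * q by rewrite divpK.
have f'_neq0 : f %/ q != 0 by apply: contraNneq f_neq0 => f'0; rewrite f_eq f'0 mul0r.
have f'_small : (size (f %/ q)%R < size f)%N.
  rewrite {2}f_eq size_mul //; move: q_gt1; case: (size q) => [|[|s]] // _.
  by rewrite !addnS ltnS leq_addr.
have [k [g [f'_eq q_Ng]]] := IH _ (leq_trans f'_small (ltnSE f_small)) f'_neq0 q_gt1.
by exists k.+1, g; split=> //; rewrite f_eq f'_eq exprS; ring.
Qed.

Lemma ltn_size_exp q k : (1 < size q)%N -> (k < size (q ^+ k))%N.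
Proof.
move=> q_gt1; have : (0 < size (q ^+ k))%N.
  by rewrite size_poly_gt0 expf_neq0 // -size_poly_gt0 ltnW.
by move=> /prednK <-; rewrite ltnS size_exp leq_pmull // -subn1 subn_gt0.
Qed.

Lemma ltn_size_mull p g : (1 < size p)%N -> g != 0 -> (size g < size (p * g)%R)%N.
Proof.
move=> p_gt1 g_neq0; have p_neq0 : p != 0 by rewrite -size_poly_gt0 ltnW.
rewrite size_mul //; move: p_gt1; case: (size p) => [|[|s]] // _.
by rewrite !addSn ltnS leq_addl.
Qed.

Lemma monic_irredp_coprimep q q' : q \is monic -> q' \is monic ->
  irreducible_poly q -> irreducible_poly q' -> q != q' -> coprimep q q'.
Proof.
move=> q_monic q'_monic q_irr [_ q'_irr] q_neq_q'; rewrite irreducible_poly_coprime //.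
apply: contra q_neq_q' => q_q'; rewrite -eqp_monic //.
by apply: q'_irr => //; case: q_irr => q_gt1 _; rewrite gtn_eqF.
Qed.

End PolyFactor.

Lemma peval_horner_mx (R : realType) n (A : 'M[R]_n.+1) q : peval q A = horner_mx A q.
Proof.
rewrite /peval -[in RHS](coefK q) poly_def rmorph_sum; apply: eq_bigr => i _.
by rewrite -mul_polyC rmorphM /= horner_mx_C rmorphXn /= horner_mx_X -mulmxE mul_scalar_mx.
Qed.

Section Peval.
Variables (R : realType) (n : nat).
Implicit Types (A : 'M[R]_n) (p q : {poly R}).

Lemma pevalD A p q : peval (p + q) A = peval p A + peval q A.
Proof. by case: n A => [|n'] A; rewrite ?thinmx0 // !peval_horner_mx rmorphD. Qed.

Lemma pevalM A p q : peval (p * q) A = peval p A * peval q A.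
Proof. by case: n A => [|n'] A; rewrite ?thinmx0 // !peval_horner_mx rmorphM. Qed.

Lemma pevalXn A p k : peval (p ^+ k) A = peval p A ^+ k.
Proof. by case: n A => [|n'] A; rewrite ?thinmx0 // !peval_horner_mx rmorphXn. Qed.

Lemma pevalC A c : peval c%:P A = c%:M.
Proof. by case: n A => [|n'] A; rewrite ?thinmx0 // peval_horner_mx horner_mx_C. Qed.

Lemma peval1 A : peval 1 A = 1.
Proof. by rewrite pevalC. Qed.

Lemma pevalX A : peval 'X A = A.
Proof. by case: n A => [|n'] A; rewrite ?thinmx0 // peval_horner_mx horner_mx_X. Qed.

Lemma peval_char_poly A : peval (char_poly A) A = 0.
Proof. by case: n A => [|n'] A; rewrite ?thinmx0 // peval_horner_mx Cayley_Hamilton. Qed.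

Lemma peval_mulmx A p q (x : 'cV[R]_n) :
  peval (p * q) A *m x = peval p A *m (peval q A *m x).
Proof. by rewrite pevalM mulmxA mulmxE. Qed.

Lemma peval_widen A q N : (size q <= N)%N -> peval q A = \sum_(i < N) q`_i *: A ^+ i.
Proof.
move=> q_small; rewrite /peval (big_ord_widen _ (fun i => q`_i *: A ^+ i) q_small).
rewrite big_mkcond; apply: eq_bigr => i _; case: ltnP => // /(nth_default 0) ->.
by rewrite scale0r.
Qed.

End Peval.

Section GeneralizedEigenspace.
Variables (R : realType) (n : nat) (A : 'M[R]_n).
Implicit Types (f g q : {poly R}) (x y : 'cV[R]_n).

Lemma geneig_peval q f x : in_geneig A q x -> in_geneig A q (peval f A *m x).
Proof.
by rewrite /in_geneig -!pevalXn -!peval_mulmx mulrC peval_mulmx => ->; rewrite mulmx0.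
Qed.

Lemma geneigA q x : in_geneig A q x -> in_geneig A q (A *m x).
Proof. by move=> /(geneig_peval 'X); rewrite pevalX. Qed.

Lemma peval_coprimep_ker0 f g y : coprimep f g ->
  peval f A *m y = 0 -> peval g A *m y = 0 -> y = 0.
Proof.
move=> /Bezout_eq1_coprimepP [[u v] /= uv1] fy0 gy0.
rewrite -[y]mul1mx -(pevalC A 1) polyC1 -uv1 pevalD mulmxDl !peval_mulmx.
by rewrite fy0 gy0 !mulmx0 addr0.
Qed.

Lemma peval_prod_geneig (s : seq {poly R}) (w : {poly R} -> 'cV[R]_n) :
  (forall q, q \in s -> in_geneig A q (w q)) ->
  peval (\prod_(q <- s) q ^+ n) A *m \sum_(q <- s) w q = 0.
Proof.
elim: s => [|a s IH] w_geneig; first by rewrite !big_nil mulmx0.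
rewrite !big_cons mulmxDr [X in _ + X]peval_mulmx IH ?mulmx0 ?addr0; last first.
  by move=> q q_s; apply: w_geneig; rewrite inE q_s orbT.
rewrite mulrC peval_mulmx pevalXn.
by have := w_geneig a (mem_head a s); rewrite /in_geneig => ->; rewrite mulmx0.
Qed.

Lemma geneig_sum_coprime0 q' (s : seq {poly R}) (w : {poly R} -> 'cV[R]_n) :
  (forall q, q \in s -> coprimep q' q) ->
  (forall q, q \in s -> in_geneig A q (w q)) ->
  in_geneig A q' (\sum_(q <- s) w q) -> \sum_(q <- s) w q = 0.
Proof.
move=> s_coprime w_geneig; rewrite /in_geneig -pevalXn => q'_sum.
move: q'_sum (peval_prod_geneig w_geneig); apply: peval_coprimep_ker0.
rewrite big_seq; apply: (big_ind (coprimep (q' ^+ n))) => [|u v|q q_s].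
- exact: coprimep1.
- by rewrite coprimepMr => -> ->.
- by apply/coprimep_expl/coprimep_expr; apply: s_coprime.
Qed.

Lemma dvdp_char_poly_exp_le q k : (1 < size q)%N -> q ^+ k %| char_poly A -> (k <= n)%N.
Proof.
move=> q_gt1 qk_char; rewrite -ltnS -(size_char_poly A).
apply: leq_trans (ltn_size_exp k q_gt1) (dvdp_leq _ qk_char).
by rewrite -size_poly_gt0 size_char_poly.
Qed.

Lemma peval_coprimep_split f g x : coprimep f g -> peval (f * g) A *m x = 0 ->
  exists u v : {poly R}, [/\ x = peval (u * g) A *m x + peval (v * f) A *m x,
    peval f A *m (peval (u * g) A *m x) = 0 & peval g A *m (peval (v * f) A *m x) = 0].
Proof.
move=> /Bezout_eq1_coprimepP [[v u] /= vu1] fgx0; exists u, v; split.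
- by rewrite -mulmxDl -pevalD addrC vu1 peval1 mul1mx.
- by rewrite -peval_mulmx mulrCA peval_mulmx fgx0 mulmx0.
- by rewrite -peval_mulmx mulrCA [g * f]mulrC peval_mulmx fgx0 mulmx0.
Qed.

Lemma primary_decomposition_dvdp f : f %| char_poly A -> forall x, peval f A *m x = 0 ->
  exists (s : seq {poly R}) (h : {poly R} -> {poly R}),
    (forall q, q \in s ->
       [/\ q \is monic, irreducible_poly q, q %| f & in_geneig A q (peval (h q) A *m x)])
    /\ x = \sum_(q <- s) peval (h q) A *m x.
Proof.
elim: {f}(size f).+1 {-2}f (ltnSn (size f)) => // N IH f f_small f_char x fx0.
have char_neq0 : char_poly A != 0 by rewrite -size_poly_gt0 size_char_poly.
have f_neq0 : f != 0 by apply: contraNneq char_neq0 => f0; move: f_char; rewrite f0 dvd0p.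
have [f_le1 | f_gt1] := leqP (size f) 1.
  exists [::], (fun=> 0); split=> //; rewrite big_nil.
  move: fx0 f_neq0; rewrite [f]size1_polyC // pevalC mul_scalar_mx polyC_eq0.
  by move=> /eqP; rewrite scaler_eq0 => /orP[/eqP -> | /eqP ->]; rewrite ?eqxx.
have [q [q_monic q_irr q_f]] :
    exists q : {poly R}, [/\ q \is monic, irreducible_poly q & q %| f].
  exact: exists_monic_irredp_dvdp.
have q_gt1 : (1 < size q)%N by case: q_irr.
have [k [g [f_eq q_Ng]]] := exists_max_power_dvdp f_neq0 q_gt1.
have k_gt0 : (0 < k)%N by case: k f_eq => // f_eq; move: q_f; rewrite f_eq mul1r (negPf q_Ng).
have k_le_n : (k <= n)%N.
  by apply: dvdp_char_poly_exp_le q_gt1 _; apply: dvdp_trans f_char; rewrite f_eq dvdp_mulr.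
have g_small : (size g < N)%N.
  apply: leq_trans (ltnSE f_small); rewrite f_eq ltn_size_mull //.
    exact: leq_ltn_trans k_gt0 (ltn_size_exp k q_gt1).
  by apply: contraNneq f_neq0 => g0; rewrite f_eq g0 mulr0.
have g_char : g %| char_poly A by apply: dvdp_trans f_char; rewrite f_eq dvdp_mull.
have qk_g : coprimep (q ^+ k) g by apply: coprimep_expl; rewrite irreducible_poly_coprime.
rewrite f_eq in fx0; have [u [v [x_eq qk_y0 g_z0]]] := peval_coprimep_split qk_g fx0.
have [s [h [s_spec z_eq]]] := IH g g_small g_char _ g_z0.
exists (q :: s), (fun r => if r == q then u * g else h r * (v * q ^+ k)); split.
  move=> r; rewrite inE; case: eqP => [-> _ | _ /= r_s].
    split=> //; rewrite /in_geneig -pevalXn.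
    have -> : q ^+ n = q ^+ (n - k) * q ^+ k by rewrite -exprD subnK.
    by rewrite peval_mulmx qk_y0 mulmx0.
  have [r_monic r_irr r_g r_geneig] := s_spec r r_s.
  split=> //; last by rewrite peval_mulmx.
  by apply: dvdp_trans r_g _; rewrite f_eq dvdp_mull.
rewrite big_cons eqxx {1}x_eq {1}z_eq; congr (_ + _); apply: eq_big_seq => r r_s.
have [_ _ r_g _] := s_spec r r_s.
rewrite ifN; first by rewrite -peval_mulmx.
by apply: contraNneq q_Ng => <-.
Qed.

Lemma primary_decomposition x : exists (s : seq {poly R}) (h : {poly R} -> {poly R}),
  (forall q, q \in s -> real_eig_factor A q /\ in_geneig A q (peval (h q) A *m x))
  /\ x = \sum_(q <- s) peval (h q) A *m x.
Proof.
have char_x0 : peval (char_poly A) A *m x = 0 by rewrite peval_char_poly mul0mx.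
have [s [h [s_spec x_eq]]] := primary_decomposition_dvdp (dvdpp _) char_x0.
by exists s, h; split=> // q /s_spec [q_monic q_irr q_char q_geneig].
Qed.

End GeneralizedEigenspace.

Section InvariantSubspace.
Variables (R : realType) (n : nat) (A : 'M[R]_n) (P : 'cV[R]_n -> Prop).
Hypotheses (P0 : P 0) (PD : forall x y, P x -> P y -> P (x + y)).
Hypotheses (PZ : forall c x, P x -> P (c *: x)) (PA : forall x, P x -> P (A *m x)).

Lemma invariant_peval q x : P x -> P (peval q A *m x).
Proof.
move=> Px; rewrite /peval mulmx_suml; apply: big_ind => // i _.
rewrite -scalemxAl; apply: PZ; elim: (nat_of_ord i) => [|j IH]; first by rewrite mul1mx.
by rewrite exprS -mulmxE -mulmxA; apply: PA.
Qed.

End InvariantSubspace.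

Lemma in_ker_peval (R : realType) r n (A : 'M[R]_n) (M : 'M[R]_(r, n)) q x :
  (forall y, in_ker M y -> in_ker M (A *m y)) -> in_ker M x -> in_ker M (peval q A *m x).
Proof.
move=> MA; apply: invariant_peval => // [|y z My Mz|c y My]; rewrite /in_ker.
- by rewrite mulmx0.
- by rewrite mulmxDr My Mz addr0.
- by rewrite -scalemxAr My scaler0.
Qed.

Section Reachable.
Variables (R : realType) (n l : nat) (A : 'M[R]_n) (G : 'M[R]_(n, l)).

Lemma in_reach_kP k x : in_im (reach_k A G k) x <->
  exists f : nat -> 'cV[R]_l, x = \sum_(i < k) A ^+ i *m (G *m f i).
Proof.
elim: k x => [|k IH] x.
  split=> [[u ->]|[f ->]]; last by exists 0; rewrite big_ord0 mul0mx.
  by exists (fun=> 0); rewrite big_ord0 mul0mx.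
split=> [[u ->] | [f ->]] /=.
  rewrite -[u : 'cV_(l + k * l)]vsubmxK mul_row_col -mulmxA.
  have [f ->] := (IH _).1 (ex_intro _ (dsubmx (u : 'cV_(l + k * l))) erefl).
  exists (fun i => if i is i'.+1 then f i' else usubmx (u : 'cV_(l + k * l))).
  rewrite big_ord_recl /= expr0 mul1mx mulmx_sumr; congr (_ + _).
  by apply: eq_bigr => i _; rewrite exprS mulmxA mulmxE.
have [u u_eq] := (IH _).2 (ex_intro _ (fun i => f i.+1) erefl).
exists (col_mx (f 0%N) u); rewrite mul_row_col -mulmxA -u_eq mulmx_sumr.
rewrite big_ord_recl /= expr0 mul1mx; congr (_ + _).
by apply: eq_bigr => i _; rewrite exprS -mulmxE !mulmxA.
Qed.

Lemma in_Reach_pow k w : in_im (Reach A G) (A ^+ k *m (G *m w)).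
Proof.
have char_neq0 : char_poly A != 0 by rewrite -size_poly_gt0 size_char_poly.
pose r := 'X^k %% char_poly A.
(* Cayley--Hamilton: [A ^+ k] is a polynomial of degree [< n] in [A]. *)
have Ak : A ^+ k = peval r A.
  rewrite -[in LHS](pevalX A) -pevalXn {1}(divp_eq 'X^k (char_poly A)).
  by rewrite pevalD pevalM peval_char_poly mulr0 add0r.
have r_small : (size r <= n)%N by rewrite -ltnS -(size_char_poly A) ltn_modp.
apply/in_reach_kP; exists (fun i => r`_i *: w).
rewrite Ak (peval_widen A r_small) mulmx_suml; apply: eq_bigr => i _.
by rewrite -scalemxAl -!scalemxAr.
Qed.

Lemma in_im0 k (M : 'M[R]_(n, k)) : in_im M 0.
Proof. by exists 0; rewrite mulmx0. Qed.

Lemma in_imD k (M : 'M[R]_(n, k)) x y : in_im M x -> in_im M y -> in_im M (x + y).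
Proof. by move=> [u ->] [v ->]; exists (u + v); rewrite mulmxDr. Qed.

Lemma in_imZ k (M : 'M[R]_(n, k)) c x : in_im M x -> in_im M (c *: x).
Proof. by move=> [u ->]; exists (c *: u); rewrite scalemxAr. Qed.

Lemma in_ReachA x : in_im (Reach A G) x -> in_im (Reach A G) (A *m x).
Proof.
move=> /in_reach_kP [f ->]; rewrite mulmx_sumr.
apply: big_ind => [|y z|i _]; [exact: in_im0 | exact: in_imD |].
by rewrite mulmxA mulmxE -exprS; apply: in_Reach_pow.
Qed.

Lemma in_Reach_peval q x : in_im (Reach A G) x -> in_im (Reach A G) (peval q A *m x).
Proof.
apply: invariant_peval; [exact: in_im0 | exact: in_imD | exact: in_imZ | exact: in_ReachA].
Qed.

End Reachable.

Section Observable.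
Variables (R : realType) (n p : nat) (A : 'M[R]_n) (C : 'M[R]_(p, n)).

Lemma obs_k_ker k (x : 'cV[R]_n) : (forall i, C *m (A ^+ i *m x) = 0) -> obs_k A C k *m x = 0.
Proof.
elim: k x => [|k IH] x Cx0; first by rewrite mul0mx.
have Cx : C *m x = 0 by have := Cx0 0%N; rewrite mul1mx.
have CAx : obs_k A C k *m (A *m x) = 0.
  by apply: IH => i; have := Cx0 i.+1; rewrite exprSr -mulmxE -mulmxA.
by rewrite /= mul_col_mx -mulmxA Cx CAx col_mx0.
Qed.

Lemma in_ker_Obs_C (x : 'cV[R]_n) : in_ker (Obs A C) x -> C *m x = 0.
Proof.
rewrite /in_ker /Obs; case: n A C x => [|n'] A' C' x.
  by move=> _; rewrite [x]flatmx0 mulmx0.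
by rewrite /= mul_col_mx => /eqP; rewrite col_mx_eq0 => /andP[/eqP].
Qed.

End Observable.

Section KernelDimension.
Variable R : realType.

Lemma kerdimE r n (M : 'M[R]_(r, n)) : kerdim M = (n - \rank M)%N.
Proof. by rewrite /kerdim mxrank_ker mxrank_tr. Qed.

Lemma sub_ker_submx r1 r2 n (M : 'M[R]_(r1, n)) (N : 'M[R]_(r2, n)) :
  (forall x, in_ker N x -> in_ker M x) -> (M <= N)%MS.
Proof.
move=> NM; rewrite submxE; apply/eqP/matrixP => i j.
have := NM (cokermx N *m delta_mx j 0); rewrite /in_ker mulmxA mulmx_coker mul0mx.
by move=> /(_ erefl) /(congr1 (fun v : 'cV[R]_r1 => v i 0)); rewrite mulmxA -colE !mxE.
Qed.

Lemma kerdim_rel_le r1 r2 n (R1 R2 : 'M[R]_(r1, n)) (S : 'M[R]_(r2, n)) :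
  (forall x, in_ker R2 x -> in_ker S x) ->
  (kerdim (row_mx R1 (- R2)) <= kerdim (row_mx S (- S)))%N.
Proof.
move=> R2S; rewrite !kerdimE leq_sub2l //.
have rank_S : (\rank (row_mx S (- S)) <= \rank S)%N.
  have -> : row_mx S (- S) = S *m row_mx 1%:M (- 1%:M).
    by rewrite mul_mx_row mulmx1 mulmxN mulmx1.
  exact: mxrankM_maxl.
have rank_R2 : (\rank R2 <= \rank (row_mx R1 (- R2)))%N.
  apply: leq_trans (mxrankM_maxl _ (col_mx 0 1%:M)).
  by rewrite mul_row_col mulmx0 add0r mulmx1 mxrank_opp.
exact: leq_trans rank_S (leq_trans (mxrankS (sub_ker_submx R2S)) rank_R2).
Qed.

End KernelDimension.

Lemma in_relE (R : realType) r n (R1 R2 : 'M[R]_(r, n)) x x' :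
  in_rel R1 R2 x x' <-> R1 *m x = R2 *m x'.
Proof.
rewrite /in_rel mul_row_col mulNmx.
by split=> [/eqP | ->]; [rewrite subr_eq0 => /eqP | exact: subrr].
Qed.

Lemma in_rel_diagE (R : realType) r n (M : 'M[R]_(r, n)) x x' :
  in_rel M M x x' <-> in_ker M (x - x').
Proof.
rewrite in_relE /in_ker mulmxBr.
by split=> [-> | /eqP]; [exact: subrr | rewrite subr_eq0 => /eqP].
Qed.

Section SSigma.
Variables (R : realType) (n l p : nat).
Variables (A : 'M[R]_n) (G : 'M[R]_(n, l)) (C : 'M[R]_(p, n)).

Definition in_SSigma (x : 'cV[R]_n) : Prop :=
  exists (s : seq {poly R}) (v : {poly R} -> 'cV[R]_n),
    [/\ forall q, q \in s ->
          [/\ real_eig_factor A q,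
              (forall y, in_geneig A q y -> in_ker (Obs A C) y),
              (forall y, in_geneig A q y -> in_im (Reach A G) y -> y = 0)
            & in_geneig A q (v q)]
      & x = \sum_(q <- s) v q].

Lemma in_SSigmaA x : in_SSigma x -> in_SSigma (A *m x).
Proof.
move=> [s [v [s_spec ->]]]; exists s, (fun q => A *m v q); split; last exact: mulmx_sumr.
by move=> q /s_spec [q_factor SQ SG0 /geneigA].
Qed.

Lemma in_SSigma_C x : in_SSigma x -> C *m x = 0.
Proof.
move=> [s [v [s_spec ->]]]; rewrite mulmx_sumr big1_seq // => q /andP[_ /s_spec [_ SQ _ vq]].
exact/in_ker_Obs_C/SQ.
Qed.

Lemma in_SSigma_Reach0 x : in_im (Reach A G) x -> in_SSigma x -> x = 0.
Proof.
move=> x_G [s [v [s_spec x_eq]]].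
have [s' [h [s'_spec x_eq']]] := primary_decomposition A x.
rewrite x_eq' big1_seq // => q' /andP[_ /s'_spec [[q'_monic [q'_irr _]] q'_geneig]].
have [q'_s | q'_Ns] := boolP (q' \in s).
  by have [_ _ SG0 _] := s_spec q' q'_s; apply: SG0 => //; apply: in_Reach_peval.
move: q'_geneig; rewrite x_eq mulmx_sumr; apply: geneig_sum_coprime0 => q q_s.
  have [[q_monic [q_irr _]] _ _ _] := s_spec q q_s.
  by apply: monic_irredp_coprimep => //; apply: contraNneq q'_Ns => ->.
by have [_ _ _ /(geneig_peval (h q'))] := s_spec q q_s.
Qed.

Hypothesis dichotomy : forall q : {poly R}, real_eig_factor A q ->
  ((forall x, in_geneig A q x -> in_im (Reach A G) x) \/
   (forall x, in_geneig A q x -> in_im (Reach A G) x -> x = 0)) /\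
  ((forall x, in_geneig A q x -> in_ker (Obs A C) x) \/
   (forall x, in_geneig A q x -> in_ker (Obs A C) x -> x = 0)).

Lemma ker_sub_SSigma r (M : 'M[R]_(r, n)) x :
  (forall y, in_ker M y -> in_ker M (A *m y)) ->
  (forall y, in_ker M y -> C *m y = 0) ->
  (forall y, in_im (Reach A G) y -> in_ker M y -> y = 0) ->
  in_ker M x -> in_SSigma x.
Proof.
move=> MA MC MG Mx.
have MQ y : in_ker M y -> in_ker (Obs A C) y.
  move=> My; apply: obs_k_ker => i; apply: MC.
  by rewrite -(pevalX A) -pevalXn; apply: in_ker_peval.
have [s [h [s_spec x_eq]]] := primary_decomposition A x.
pose y q := peval (h q) A *m x.
have My q : in_ker M (y q) by apply: in_ker_peval.
exists [seq q <- s | y q != 0], y; split; last first.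
  by rewrite big_filter big_rmcond // => q /negPn /eqP.
move=> q; rewrite mem_filter => /andP[/eqP yq_neq0 /s_spec [q_factor q_geneig]].
have [SG | SG0] := (dichotomy q_factor).1.
  by case: yq_neq0; apply: MG (SG _ q_geneig) (My q).
have [SQ | SQ0] := (dichotomy q_factor).2; first by split.
by case: yq_neq0; apply: SQ0 q_geneig (MQ _ (My q)).
Qed.

End SSigma.

Theorem theorem8 (R : realType) (n m l p : nat)
  (A : 'M[R]_n) (B : 'M[R]_(n, m)) (G : 'M[R]_(n, l)) (C : 'M[R]_(p, n))
  (mu : 'cV[R]_l) :
  (* dichotomy hypotheses on every generalized real eigenspace *)
  (forall q : {poly R}, real_eig_factor A q ->
     ((forall x, in_geneig A q x -> in_im (Reach A G) x) \/
      (forall x, in_geneig A q x -> in_im (Reach A G) x -> x = 0)) /\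
     ((forall x, in_geneig A q x -> in_ker (Obs A C) x) \/
      (forall x, in_geneig A q x -> in_ker (Obs A C) x -> x = 0))) ->
  forall (r : nat) (RR : 'M[R]_(r, n)),
  (* ker RR = S_Sigma = sum of the S_q with S_q in Q and S_q /\ G = 0 *)
  (forall x : 'cV[R]_n, in_ker RR x <->
     exists (s : seq {poly R}) (v : {poly R} -> 'cV[R]_n),
       [/\ forall q, q \in s ->
             [/\ real_eig_factor A q,
                 (forall y, in_geneig A q y -> in_ker (Obs A C) y),
                 (forall y, in_geneig A q y -> in_im (Reach A G) y -> y = 0)
               & in_geneig A q (v q)]
         & x = \sum_(q <- s) v q]) ->
  [/\ total_rel (in_rel RR RR),
      h_conditions A B G C mu RR RR
    & forall (r' : nat) (R1 R2 : 'M[R]_(r', n)),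
        total_rel (in_rel R1 R2) -> h_conditions A B G C mu R1 R2 ->
        (kerdim (row_mx R1 (- R2)) <= kerdim (row_mx RR (- RR)))%N].
Proof.
move=> dichotomy r RR kerRR.
have RR_G0 x : in_im (Reach A G) x -> in_ker RR x -> x = 0.
  by move=> x_G /kerRR; apply: in_SSigma_Reach0.
split.
- by split=> x; exists x; apply/in_rel_diagE; rewrite /in_ker subrr mulmx0.
- split; [|split; [by []|split; [by []|split; [by []|split]]]].
  + move=> x x' /in_rel_diagE /kerRR /in_SSigmaA /kerRR.
    by rewrite mulmxBr => /in_rel_diagE.
  + by move=> x x' /in_rel_diagE /kerRR /in_SSigma_C Cx; apply/in_rel_diagE.
  + by split; apply: RR_G0.
move=> r' R1 R2 _ [h0 [_ [_ [_ [h4 [_ R2_G0]]]]]].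
have R2_rel y : in_ker R2 y -> in_rel R1 R2 0 y.
  by move=> R2y; apply/in_relE; rewrite R2y mulmx0.
apply: kerdim_rel_le => x R2x; apply/kerRR.
apply: (ker_sub_SSigma dichotomy _ _ R2_G0 R2x) => y /R2_rel.
- by move=> /h0 /in_relE; rewrite !mulmx0 => /esym.
- by move=> /h4 /in_relE; rewrite mulmx0 => /esym.
Qed.
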